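(* Let $c\in\mathsf{ACirc}[n,m]$ with initial state $c_0$, and let $t<0$. Then there is a transition $t\vdash c_0\xrightarrow[0]{0}c_0$, i.e. with left label the zero vector of $k^n$, right label the zero vector of $k^m$, and target state again $c_0$.
   Context: Fix a field $k$. Circuits: terms built from generators with sorts $(n,m)$: copier $\Delta:(1,2)$, discard $!:(1,0)$, amplifier $\mathsf{s}_r:(1,1)$ ($r\in k$), register $\mathsf{x}:(1,1)$, adder $+:(2,1)$, zero $0:(0,1)$, one $\mathbf{1}:(0,1)$; mirror images $\Delta^{op}:(2,1)$, $!^{op}:(0,1)$, $\mathsf{s}_r^{op}$, $\mathsf{x}^{op}:(1,1)$, $+^{op}:(1,2)$, $0^{op}:(1,0)$, $\mathbf{1}^{op}:(1,0)$; $\mathrm{id}_0:(0,0),\mathrm{id}_1:(1,1),\mathrm{sw}:(2,2)$; closed under $;$ and $\oplus$; $\mathsf{ACirc}[n,m]$ denotes circuits of sort $(n,m)$. Operational semantics: a state is a circuit with a value of $k$ stored in each register ($\mathsf x$, $\mathsf x^{op}$); the initial state $c_0$ stores $0$ in all registers. Transitions $t\vdash c\xrightarrow[w]{v}c'$ (time $t\in\mathbb Z$, left label $v\in k^n$, right label $w\in k^m$; $\bullet$ denotes the empty vector) are generated by, for all $t$ and $a,b\in k$: $\Delta$: left $a$, right $(a,a)$; $!$: left $a$, right $\bullet$; $+$: left $(a,b)$, right $a+b$; $0$: left $\bullet$, right $0$; $\mathsf s_r$: left $a$, right $ra$; $\mathsf x$ storing $b$: left $a$, right $b$, new state stores $a$;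 $\mathbf 1$: left $\bullet$, right $1$ if $t=0$ and $0$ if $t\ne0$; each mirrored generator: the same rule with left and right labels exchanged; $\mathrm{id}_1$: $a/a$; $\mathrm{sw}$: $(a,b)/(b,a)$; $\mathrm{id}_0$: $\bullet/\bullet$; if $t\vdash c\xrightarrow[v]{u}c'$ and $t\vdash d\xrightarrow[w]{v}d'$ then $t\vdash c;d\xrightarrow[w]{u}c';d'$; if $t\vdash c\xrightarrow[v_1]{u_1}c'$ and $t\vdash d\xrightarrow[v_2]{u_2}d'$ then $t\vdash c\oplus d\xrightarrow[(v_1,v_2)]{(u_1,u_2)}c'\oplus d'$. *)

From HB Require Import structures.
From mathcomp Require Import all_boot all_order all_algebra.
Set Implicit Arguments. Unset Strict Implicit. Unset Printing Implicit Defensive.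
Import Order.TTheory GRing.Theory Num.Theory.
Local Open Scope ring_scope.

(* Terms of sort (n,m) over amplifier scalars in k, with registers carrying
   data of type R.  Circuits: R = unit.  States: R = k (stored value). *)
Inductive term (k R : Type) : nat -> nat -> Type :=
| Copy : term k R 1 2
| Disc : term k R 1 0
| Amp : k -> term k R 1 1
| Reg : R -> term k R 1 1
| Add : term k R 2 1
| Zero : term k R 0 1
| One : term k R 0 1
| CopyOp : term k R 2 1
| DiscOp : term k R 0 1
| AmpOp : k -> term k R 1 1
| RegOp : R -> term k R 1 1
| AddOp : term k R 1 2
| ZeroOp : term k R 1 0
| OneOp : term k R 1 0
| Id0 : term k R 0 0
| Id1 : term k R 1 1
| Sw : term k R 2 2
| Seq : forall n m l, term k R n m -> term k R m l -> term k R n l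
| Par : forall n1 m1 n2 m2, term k R n1 m1 -> term k R n2 m2 ->
        term k R (n1 + n2) (m1 + m2).

Arguments Copy {k R}. Arguments Disc {k R}. Arguments Add {k R}.
Arguments Zero {k R}. Arguments One {k R}. Arguments CopyOp {k R}.
Arguments DiscOp {k R}. Arguments AddOp {k R}. Arguments ZeroOp {k R}.
Arguments OneOp {k R}. Arguments Id0 {k R}. Arguments Id1 {k R}.
Arguments Sw {k R}. Arguments Amp {k R}. Arguments AmpOp {k R}.
Arguments Reg {k R}. Arguments RegOp {k R}.

Definition ACirc (k : Type) (n m : nat) := term k unit n m.
Definition state (k : Type) (n m : nat) := term k k n m.

Fixpoint init (k : fieldType) n m (c : ACirc k n m) : state k n m :=
  match c in term _ _ n m return state k n m with
  | Copy => Copy | Disc => Disc | Amp r => Amp r | Reg _ => Reg 0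
  | Add => Add | Zero => Zero | One => One | CopyOp => CopyOp
  | DiscOp => DiscOp | AmpOp r => AmpOp r | RegOp _ => RegOp 0
  | AddOp => AddOp | ZeroOp => ZeroOp | OneOp => OneOp
  | Id0 => Id0 | Id1 => Id1 | Sw => Sw
  | Seq _ _ _ c1 c2 => Seq (init c1) (init c2)
  | Par _ _ _ _ c1 c2 => Par (init c1) (init c2)
  end.

Definition v1 (k : fieldType) (a : k) : 'rV[k]_1 := \row_(i < 1) a.
Definition v2 (k : fieldType) (a b : k) : 'rV[k]_2 := row_mx (v1 a) (v1 b).
Definition vnil (k : fieldType) : 'rV[k]_0 := 0.
Definition oneval (k : fieldType) (t : int) : k := if t == 0 then 1 else 0.

(* step t c v w c'  :  t |- c --v/w--> c'  (v left label, w right label) *)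
Inductive step (k : fieldType) (t : int) :
  forall n m, state k n m -> 'rV[k]_n -> 'rV[k]_m -> state k n m -> Prop :=
| st_copy a : step t Copy (v1 a) (v2 a a) Copy
| st_disc a : step t Disc (v1 a) (vnil k) Disc
| st_add a b : step t Add (v2 a b) (v1 (a + b)) Add
| st_zero : step t Zero (vnil k) (v1 0) Zero
| st_amp r a : step t (Amp r) (v1 a) (v1 (r * a)) (Amp r)
| st_reg a b : step t (Reg b) (v1 a) (v1 b) (Reg a)
| st_one : step t One (vnil k) (v1 (oneval k t)) One
| st_copyop a : step t CopyOp (v2 a a) (v1 a) CopyOp
| st_discop a : step t DiscOp (vnil k) (v1 a) DiscOp
| st_addop a b : step t AddOp (v1 (a + b)) (v2 a b) AddOp
| st_zeroop : step t ZeroOp (v1 0) (vnil k) ZeroOp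
| st_ampop r a : step t (AmpOp r) (v1 (r * a)) (v1 a) (AmpOp r)
| st_regop a b : step t (RegOp b) (v1 b) (v1 a) (RegOp a)
| st_oneop : step t OneOp (v1 (oneval k t)) (vnil k) OneOp
| st_id1 a : step t Id1 (v1 a) (v1 a) Id1
| st_sw a b : step t Sw (v2 a b) (v2 b a) Sw
| st_id0 : step t Id0 (vnil k) (vnil k) Id0
| st_seq n m l (c c' : state k n m) (d d' : state k m l) u v w :
    step t c u v c' -> step t d v w d' -> step t (Seq c d) u w (Seq c' d')
| st_par n1 m1 n2 m2 (c c' : state k n1 m1) (d d' : state k n2 m2)
    u1 v1 u2 v2 :
    step t c u1 v1 c' -> step t d u2 v2 d' ->
    step t (Par c d) (row_mx u1 u2) (row_mx v1 v2) (Par c' d').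

From mathcomp Require Import all_boot all_order all_algebra.
Import Order.TTheory GRing.Theory Num.Theory.
Local Open Scope ring_scope.

(* Every generator admits the all-zero labelling, and registers holding 0
   keep holding 0 under it.  The only time-dependent generator is the
   constant 1, which emits 0 at every time t <> 0; so away from t = 0 the
   zero labelling is a transition of the initial state onto itself. *)

Section ZeroStep.

Variables (k : fieldType) (t : int).
Hypothesis t_neq0 : t != 0.

Lemma v1_0 : v1 (0 : k) = 0.
Proof. by apply/rowP => i; rewrite !mxE. Qed.

Lemma v2_0 : v2 (0 : k) 0 = 0.
Proof. by rewrite /v2 v1_0 row_mx0. Qed.

Lemma oneval_neq0 : oneval k t = 0.
Proof. by rewrite /oneval (negbTE t_neq0). Qed.

Lemma step_init_zero n m (c : ACirc k n m) : step t (init c) 0 0 (init c).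
Proof.
elim: c => /=.
- by have := st_copy t (0 : k); rewrite v1_0 v2_0.
- by have := st_disc t (0 : k); rewrite v1_0.
- by move=> r; have := st_amp t r (0 : k); rewrite mulr0 v1_0.
- by move=> _; have := st_reg t (0 : k) 0; rewrite v1_0.
- by have := st_add t (0 : k) 0; rewrite addr0 v1_0 v2_0.
- by have := st_zero k t; rewrite v1_0.
- by have := st_one k t; rewrite oneval_neq0 v1_0.
- by have := st_copyop t (0 : k); rewrite v1_0 v2_0.
- by have := st_discop t (0 : k); rewrite v1_0.
- by move=> r; have := st_ampop t r (0 : k); rewrite mulr0 v1_0.
- by move=> _; have := st_regop t (0 : k) 0; rewrite v1_0.
- by have := st_addop t (0 : k) 0; rewrite addr0 v1_0 v2_0.
- by have := st_zeroop k t; rewrite v1_0.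
- by have := st_oneop k t; rewrite oneval_neq0 v1_0.
- exact: st_id0.
- by have := st_id1 t (0 : k); rewrite v1_0.
- by have := st_sw t (0 : k) 0; rewrite v2_0.
- by move=> ? ? ? c1 IH1 c2 IH2; apply: st_seq IH1 IH2.
- by move=> ? ? ? ? c1 IH1 c2 IH2; have := st_par IH1 IH2; rewrite !row_mx0.
Qed.

End ZeroStep.

Theorem lemma2 (k : fieldType) (n m : nat) (c : ACirc k n m) (t : int) :
  t < 0 -> step t (init c) 0 0 (init c).
Proof. by move=> /ltr0_neq0 t_neq0; apply: step_init_zero. Qed.
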